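(* Let $X$ be an $\operatorname{Irr}$-continuous $T_0$ space. Then for every $x\in X$, $$x=\bigvee\bigcup\{\twoheaddownarrow_{\operatorname{Irr}} y \mid y\ll_{\operatorname{Irr}} x\}.$$
   Context: For a topological space $X$, a nonempty subset $E$ is irreducible if whenever $E\subseteq A_1\cup A_2$ with $A_1,A_2$ closed, $E\subseteq A_1$ or $E\subseteq A_2$. The specialisation order is $x\le y$ iff $x\in\operatorname{cl}(\{y\})$; $\uparrow x=\{z:z\ge x\}$; $\bigvee$ denotes supremum in this order. $\operatorname{Irr}^+(X)$ is the set of irreducible subsets of $X$ whose supremum exists. $x\ll_{\operatorname{Irr}} y$ iff for every $E\in\operatorname{Irr}^+(X)$ with $\bigvee E\ge y$, $E\cap\uparrow x\ne\emptyset$; $\twoheaddownarrow_{\operatorname{Irr}} x=\{y:y\ll_{\operatorname{Irr}} x\}$. $X$ is $\operatorname{Irr}$-continuous if for every $x$, $\twoheaddownarrow_{\operatorname{Irr}} x$ is irreducible and $x=\bigvee\twoheaddownarrow_{\operatorname{Irr}} x$. *)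

From HB Require Import structures.
From mathcomp Require Import all_boot all_order.
From mathcomp Require Import all_classical all_reals all_analysis.
Set Implicit Arguments. Unset Strict Implicit. Unset Printing Implicit Defensive.
Local Open Scope classical_set_scope.

Section IrrDefs.
Variable X : topologicalType.

Definition spec_le (x y : X) : Prop := closure [set y] x.

Definition irreducible (E : set X) : Prop :=
  E !=set0 /\
  forall A1 A2 : set X, closed A1 -> closed A2 -> E `<=` A1 `|` A2 ->
    E `<=` A1 \/ E `<=` A2.

Definition is_sup (E : set X) (s : X) : Prop :=
  (forall e, E e -> spec_le e s) /\
  (forall u, (forall e, E e -> spec_le e u) -> spec_le s u).

Definition upset (x : X) : set X := [set z | spec_le x z].

Definition IrrPlus (E : set X) : Prop := irreducible E /\ exists s, is_sup E s.

Definition way_below_Irr (x y : X) : Prop :=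
  forall E : set X, IrrPlus E ->
    (exists s, is_sup E s /\ spec_le y s) -> E `&` upset x !=set0.

Definition ddarrow_Irr (x : X) : set X := [set y | way_below_Irr y x].

Definition Irr_continuous : Prop :=
  forall x : X, irreducible (ddarrow_Irr x) /\ is_sup (ddarrow_Irr x) x.

End IrrDefs.

From mathcomp Require Import all_boot all_order.
From mathcomp Require Import all_classical all_reals all_analysis.
Local Open Scope classical_set_scope.
Set Implicit Arguments.

(* The supremum of a union of sets is the supremum of their suprema: every
   [y] way-below [x] is the supremum of its own way-below set, and [x] is the
   supremum of these [y]. *)

Section SpecialisationOrder.
Variable X : topologicalType.

Lemma spec_le_trans (a b c : X) : spec_le a b -> spec_le b c -> spec_le a c.
Proof.
move=> ab bc; have : closure [set b] `<=` closure [set c].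
  rewrite [X in _ `<=` X](closure_id _).1; last exact: closed_closure.
  by apply: closureS => z ->.
by apply.
Qed.

Lemma is_sup_bigcup (D : set X) (F : X -> set X) (x : X) :
  is_sup D x -> (forall y, D y -> is_sup (F y) y) ->
  is_sup (\bigcup_(y in D) F y) x.
Proof.
move=> [Dx_ub Dx_least] supF; split.
  by move=> e [y Dy Fye]; apply: spec_le_trans (Dx_ub y Dy); apply: (supF y Dy).1.
move=> u u_ub; apply: Dx_least => y Dy; apply: (supF y Dy).2 => e Fye.
by apply: u_ub; exists y.
Qed.

End SpecialisationOrder.

Theorem lemma3p4 (X : topologicalType) :
  kolmogorov_space X -> Irr_continuous X ->
  forall x : X,
    is_sup (\bigcup_(y in ddarrow_Irr x) ddarrow_Irr y) x.
Proof.
move=> _ Xcont x.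
apply: is_sup_bigcup; first exact: (Xcont x).2.
by move=> y _; exact: (Xcont y).2.
Qed.
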